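(* Let $\gamma\in\mathbb{R}$ and $|a|$ small. For every $\tau\in(-1/2,1/2]\setminus\{0\}$, the $L^2(\mathbb{T})$-spectrum of $\mathcal H_a(\gamma,\tau)$ is symmetric with respect to reflection through the imaginary axis: if $\mu$ is in the spectrum, so is $-\overline{\mu}$.
   Context: Here $\rho,\phi\in\mathbb{R}$, $k>0$, and $w$, $c$ describe the small-amplitude periodic traveling wave of the Konopelchenko–Dubrovsky equation: $w$ is smooth, real, even and $2\pi$-periodic, $w(z)=a\cos z+a^2(A_0+A_2\cos 2z)+a^3A_3\cos 3z+O(a^4)$, $c=k^2+a^2c_2+O(a^4)$, with $A_0=-\frac{3\rho}{2k^2}$, $A_2=\frac{\rho}{2k^2}$, $A_3=-\frac{\phi^2}{64k^2}+\frac{3\rho^2}{16k^4}$, $c_2=\frac{3\phi^2}{8}+\frac{15\rho^2}{2k^2}$. The operator $\mathcal H_a(\gamma,\tau)=kc(\partial_z+i\tau)+k^3(\partial_z+i\tau)^3+6k\rho(\partial_z+i\tau)(w\,\cdot)-\tfrac32\phi^2k(\partial_z+i\tau)(w^2\,\cdot)-\big(\frac{3\gamma^2}{k}+3i\phi\gamma w_z\big)(\partial_z+i\tau)^{-1}$ acts in $L^2(\mathbb{T})$ ($2\pi$-periodic square-integrable functions). *)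

From Stdlib Require Import Reals ZArith.
From Coquelicot Require Import Coquelicot.
Open Scope R_scope.

(* Sum over Z, split into n >= 0 and n < 0, real and imaginary parts
   separately (used only for absolutely convergent series). *)
Definition sumZ (s : Z -> C) : C :=
  (Series (fun n => Re (s (Z.of_nat n))) + Series (fun n => Re (s (- Z.of_nat (S n))%Z)),
   Series (fun n => Im (s (Z.of_nat n))) + Series (fun n => Im (s (- Z.of_nat (S n))%Z))).

Definition summableZ (s : Z -> R) : Prop :=
  ex_series (fun n => s (Z.of_nat n)) /\ ex_series (fun n => s (- Z.of_nat (S n))%Z).

Definition sumZR (s : Z -> R) : R :=
  Series (fun n => s (Z.of_nat n)) + Series (fun n => s (- Z.of_nat (S n))%Z).

(* f in L^2(T) is identified with its Fourier coefficients (f_n)_{n in Z},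
   f(z) = sum_n f_n e^{inz}; Parseval makes this a unitary identification. *)
Definition in_l2 (f : Z -> C) : Prop := summableZ (fun n => (Cmod (f n))^2).
Definition l2norm (f : Z -> C) : R := sqrt (sumZR (fun n => (Cmod (f n))^2)).
(* H^3(T): the natural domain of the third-order operator *)
Definition in_H3 (f : Z -> C) : Prop :=
  summableZ (fun n => (1 + (IZR n)^2)^3 * (Cmod (f n))^2).

(* Fourier coefficient of a real 2pi-periodic continuous function:
   g_n = (1/2pi) int_0^{2pi} g(z) e^{-inz} dz *)
Definition fcoef (g : R -> R) (n : Z) : C :=
  (/ (2 * PI) * RInt (fun z => g z * cos (IZR n * z)) 0 (2 * PI),
   - (/ (2 * PI) * RInt (fun z => g z * sin (IZR n * z)) 0 (2 * PI))).

(* Fourier side of multiplication by g : (g f)_n = sum_m g_{n-m} f_m *)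
Definition mulF (g : R -> R) (f : Z -> C) (n : Z) : C :=
  sumZ (fun m => (fcoef g (n - m)%Z * f m)%C).

(* symbol of (d_z + i tau) on e^{inz} : i (n + tau) *)
Definition Dsym (tau : R) (n : Z) : C := (0, IZR n + tau).

(* The operator H_a(gamma,tau) for given wave profile w, speed c, in the
   Fourier picture:
   H = k c (d+i tau) + k^3 (d+i tau)^3 + 6 k rho (d+i tau)(w .)
       - 3/2 phi^2 k (d+i tau)(w^2 .)
       - (3 gamma^2/k + 3 i phi gamma w_z) (d + i tau)^{-1}        *)
Definition Hop (k rho phi : R) (w : R -> R) (c gamma tau : R)
    (f : Z -> C) (n : Z) : C :=
  let D := Dsym tau in
  (RtoC (k * c) * D n * f n
   + RtoC (k ^ 3) * (D n * D n * D n) * f n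
   + RtoC (6 * k * rho) * D n * mulF w f n
   - RtoC (3 / 2 * phi ^ 2 * k) * D n * mulF (fun z => ((w z) ^ 2)%R) f n
   - RtoC (3 * gamma ^ 2 / k) * (f n / D n)
   - (0, (3 * phi * gamma)%R) * mulF (Derive w) (fun m => f m / D m) n)%C.

Definition in_resolvent (H : (Z -> C) -> (Z -> C)) (mu : C) : Prop :=
  (forall g, in_l2 g ->
     exists f, in_H3 f /\ (forall n, (H f n - mu * f n)%C = g n) /\
       (forall f', in_H3 f' -> (forall n, (H f' n - mu * f' n)%C = g n) -> f' = f)) /\
  (exists K : R, 0 <= K /\ forall f g, in_H3 f -> in_l2 g ->
     (forall n, (H f n - mu * f n)%C = g n) -> l2norm f <= K * l2norm g).

Definition in_spectrum (H : (Z -> C) -> (Z -> C)) (mu : C) : Prop :=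
  ~ in_resolvent H mu.

Definition smooth (g : R -> R) : Prop := forall n x, ex_derive_n g n x.

(* Conjugating every Fourier coefficient (conjF) is an antilinear isometric
   involution of l^2(Z) preserving H^3, and it anticommutes with H: the symbol
   i(n + tau) and its inverse are purely imaginary, the constant coefficients are
   real, the even periodic profile w (symmetric about pi) and w^2 have real
   Fourier coefficients, and the odd w_z has purely imaginary ones, which cancels
   the factor i in front of it. Hence conjF (H + conj mu) = - (H - mu) conjF, so
   H - mu is boundedly invertible iff H + conj mu is. *)

From Stdlib Require Import Reals ZArith Lra FunctionalExtensionality.
From Coquelicot Require Import Coquelicot.
Open Scope R_scope.

Lemma sin_IZR_mul_2PI (n : Z) : sin (IZR n * (2 * PI)) = 0.
Proof. apply sin_eq_0_1; exists (2 * n)%Z; rewrite mult_IZR; ring. Qed.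

Lemma cos_IZR_mul_2PI (n : Z) : cos (IZR n * (2 * PI)) = 1.
Proof.
  replace (IZR n * (2 * PI)) with (2 * (IZR n * PI)) by ring.
  rewrite cos_2a_sin, sin_eq_0_1 by (exists n; reflexivity); ring.
Qed.

Lemma sin_IZR_mul_2PI_minus (n : Z) (z : R) :
  sin (IZR n * (2 * PI - z)) = - sin (IZR n * z).
Proof.
  rewrite Rmult_minus_distr_l, sin_minus, sin_IZR_mul_2PI, cos_IZR_mul_2PI; ring.
Qed.

Lemma cos_IZR_mul_2PI_minus (n : Z) (z : R) :
  cos (IZR n * (2 * PI - z)) = cos (IZR n * z).
Proof.
  rewrite Rmult_minus_distr_l, cos_minus, sin_IZR_mul_2PI, cos_IZR_mul_2PI; ring.
Qed.

Lemma RInt_reflect_odd (h : R -> R) (a b : R) :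
  ex_RInt h a b -> (forall z, h (a + b - z) = - h z) -> RInt h a b = 0.
Proof.
  intros hint hodd.
  assert (hswap : RInt h a b = RInt h b a).
  { assert (hlin := RInt_comp_lin h (-1) (a + b) a b).
    replace (-1 * a + (a + b)) with b in hlin by ring.
    replace (-1 * b + (a + b)) with a in hlin by ring.
    rewrite <- (hlin (ex_RInt_swap _ _ _ hint)).
    apply RInt_ext; intros y _.
    change (h y = -1 * h (-1 * y + (a + b))).
    replace (-1 * y + (a + b)) with (a + b - y) by ring.
    rewrite hodd; ring. }
  rewrite <- (opp_RInt_swap h a b hint) in hswap.
  change (RInt h a b = - RInt h a b) in hswap; lra.
Qed.

Lemma Derive_reflect_even (g : R -> R) (a z : R) :
  ex_derive g (a - z) -> (forall t, g (a - t) = g t) ->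
  Derive g (a - z) = - Derive g z.
Proof.
  intros hd heven.
  rewrite (Derive_ext g (fun t => g (a - t)) z) by (intros t; now rewrite heven).
  rewrite (Derive_comp g (fun t => a - t) z hd) by (auto_derive; trivial).
  replace (Derive (fun t => a - t) z) with (-1)
    by (symmetry; apply is_derive_unique; auto_derive; trivial; ring).
  ring.
Qed.

Lemma continuous_IZR_mul (n : Z) (z : R) : continuous (fun t => IZR n * t) z.
Proof.
  apply (continuous_mult (fun _ => IZR n) (fun t => t));
    [apply continuous_const | apply continuous_id].
Qed.

Lemma ex_RInt_mult_continuous (g u : R -> R) (a b : R) :
  (forall z, continuous g z) -> (forall z, continuous u z) ->
  ex_RInt (fun z => g z * u z) a b.
Proof.
  intros hg hu; apply (@ex_RInt_continuous R_CompleteNormedModule); intros z _.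
  now apply (continuous_mult g u).
Qed.

Lemma Im_fcoef_reflect_even (g : R -> R) (n : Z) :
  (forall z, continuous g z) -> (forall z, g (2 * PI - z) = g z) ->
  Im (fcoef g n) = 0.
Proof.
  intros hc heven; unfold fcoef, Im; simpl.
  rewrite RInt_reflect_odd; [ring | |].
  - apply ex_RInt_mult_continuous; [exact hc |].
    intros z; apply continuous_sin_comp, continuous_IZR_mul.
  - intros z; rewrite Rplus_0_l, heven, sin_IZR_mul_2PI_minus; ring.
Qed.

Lemma Re_fcoef_reflect_odd (g : R -> R) (n : Z) :
  (forall z, continuous g z) -> (forall z, g (2 * PI - z) = - g z) ->
  Re (fcoef g n) = 0.
Proof.
  intros hc hodd; unfold fcoef, Re; simpl.
  rewrite RInt_reflect_odd; [ring | |].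
  - apply ex_RInt_mult_continuous; [exact hc |].
    intros z; apply continuous_cos_comp, continuous_IZR_mul.
  - intros z; rewrite Rplus_0_l, hodd, cos_IZR_mul_2PI_minus; ring.
Qed.

Definition conjF (f : Z -> C) : Z -> C := fun n => Cconj (f n).

Lemma conjF_involutive (f : Z -> C) : conjF (conjF f) = f.
Proof. apply functional_extensionality; intros n; apply Cconj_conj. Qed.

Lemma Copp_conj_involutive (z : C) : (- Cconj (- Cconj z))%C = z.
Proof. rewrite Copp_conj, Cconj_conj; ring. Qed.

Lemma Cconj_RtoC (r : R) : Cconj (RtoC r) = RtoC r.
Proof. unfold Cconj, RtoC; simpl; f_equal; ring. Qed.

Lemma sumZ_conj (s : Z -> C) : Cconj (sumZ s) = sumZ (conjF s).
Proof. unfold sumZ, conjF, Cconj, Re, Im; simpl; rewrite !Series_opp; f_equal; ring. Qed.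

Lemma sumZ_opp (s : Z -> C) : sumZ (fun m => - s m)%C = (- sumZ s)%C.
Proof. unfold sumZ, Copp, Re, Im; simpl; rewrite !Series_opp; f_equal; ring. Qed.

Lemma mulF_opp (g : R -> R) (f : Z -> C) (n : Z) :
  mulF g (fun m => - f m)%C n = (- mulF g f n)%C.
Proof.
  unfold mulF; rewrite <- sumZ_opp; f_equal.
  apply functional_extensionality; intros m; ring.
Qed.

Lemma conj_mulF_real (g : R -> R) (f : Z -> C) (n : Z) :
  (forall j, Im (fcoef g j) = 0) -> Cconj (mulF g f n) = mulF g (conjF f) n.
Proof.
  intros hreal; unfold mulF; rewrite sumZ_conj; f_equal.
  apply functional_extensionality; intros m; unfold conjF.
  rewrite Cmult_conj; f_equal.
  specialize (hreal (n - m)%Z); destruct (fcoef g (n - m)%Z) as [x y].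
  unfold Im in hreal; simpl in hreal; subst.
  unfold Cconj; simpl; f_equal; ring.
Qed.

Lemma conj_mulF_imag (g : R -> R) (f : Z -> C) (n : Z) :
  (forall j, Re (fcoef g j) = 0) -> Cconj (mulF g f n) = (- mulF g (conjF f) n)%C.
Proof.
  intros himag; unfold mulF; rewrite sumZ_conj, <- sumZ_opp; f_equal.
  apply functional_extensionality; intros m; unfold conjF.
  rewrite Cmult_conj.
  specialize (himag (n - m)%Z); destruct (fcoef g (n - m)%Z) as [x y].
  unfold Re in himag; simpl in himag; subst.
  replace (Cconj (0, y)) with (- (0, y))%C by (unfold Cconj, Copp; simpl; f_equal; ring).
  ring.
Qed.

Lemma conj_Dsym (tau : R) (m : Z) : Cconj (Dsym tau m) = (- Dsym tau m)%C.
Proof. unfold Cconj, Dsym, Copp; simpl; f_equal; ring. Qed.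

Lemma conj_div_Dsym (x : C) (tau : R) (m : Z) :
  Cconj (x / Dsym tau m) = (- (Cconj x / Dsym tau m))%C.
Proof.
  assert (hinv : Cconj (/ Dsym tau m) = (- / Dsym tau m)%C)
    by (unfold Cconj, Dsym, Copp, Cinv; simpl; f_equal; unfold Rdiv; ring).
  unfold Cdiv; rewrite Cmult_conj, hinv; ring.
Qed.

Lemma Hop_conj (k rho phi : R) (w : R -> R) (c gamma tau : R) (f : Z -> C) (n : Z) :
  (forall j, Im (fcoef w j) = 0) ->
  (forall j, Im (fcoef (fun z => (w z ^ 2)%R) j) = 0) ->
  (forall j, Re (fcoef (Derive w) j) = 0) ->
  Cconj (Hop k rho phi w c gamma tau f n) =
  (- Hop k rho phi w c gamma tau (conjF f) n)%C.
Proof.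
  intros hw hw2 hdw; unfold Hop; cbv zeta.
  rewrite !Cminus_conj, !Cplus_conj, !Cmult_conj, !Cconj_RtoC, conj_Dsym, conj_div_Dsym.
  rewrite (conj_mulF_real w f n hw), (conj_mulF_real _ f n hw2), (conj_mulF_imag _ _ n hdw).
  replace (conjF (fun m => f m / Dsym tau m)%C)
    with (fun m => - (conjF f m / Dsym tau m))%C
    by (apply functional_extensionality; intros m; symmetry; apply conj_div_Dsym).
  rewrite mulF_opp.
  replace (Cconj (0, (3 * phi * gamma)%R)) with (- (0, (3 * phi * gamma)%R))%C
    by (unfold Cconj, Copp; simpl; f_equal; ring).
  unfold conjF; ring.
Qed.

Lemma in_l2_Cmod_ext (f g : Z -> C) :
  (forall n, Cmod (f n) = Cmod (g n)) -> in_l2 f <-> in_l2 g.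
Proof.
  intros hmod; unfold in_l2.
  replace (fun n => Cmod (f n) ^ 2) with (fun n => Cmod (g n) ^ 2); [tauto |].
  apply functional_extensionality; intros n; now rewrite hmod.
Qed.

Lemma l2norm_Cmod_ext (f g : Z -> C) :
  (forall n, Cmod (f n) = Cmod (g n)) -> l2norm f = l2norm g.
Proof.
  intros hmod; unfold l2norm; f_equal; f_equal.
  apply functional_extensionality; intros n; now rewrite hmod.
Qed.

Lemma in_H3_Cmod_ext (f g : Z -> C) :
  (forall n, Cmod (f n) = Cmod (g n)) -> in_H3 f <-> in_H3 g.
Proof.
  intros hmod; unfold in_H3.
  replace (fun n => (1 + IZR n ^ 2) ^ 3 * Cmod (f n) ^ 2)
    with (fun n => (1 + IZR n ^ 2) ^ 3 * Cmod (g n) ^ 2); [tauto |].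
  apply functional_extensionality; intros n; now rewrite hmod.
Qed.

Lemma Cmod_opp_conj (z : C) : Cmod (- Cconj z)%C = Cmod z.
Proof. now rewrite Cmod_opp, Cmod_conj. Qed.

Section ConjugationReflection.

Variable H : (Z -> C) -> (Z -> C).
Hypothesis H_conj : forall f n, Cconj (H f n) = (- H (conjF f) n)%C.

Lemma conjF_solves (f g : Z -> C) (mu : C) :
  (forall n, (H f n - mu * f n)%C = g n) ->
  forall n, (H (conjF f) n - (- Cconj mu) * conjF f n)%C = (- Cconj (g n))%C.
Proof. intros E n; rewrite <- E, Cminus_conj, Cmult_conj, H_conj; unfold conjF; ring. Qed.

Lemma in_resolvent_reflect (mu : C) : in_resolvent H (- Cconj mu)%C -> in_resolvent H mu.
Proof.
  intros [hsolve [K [hK hbound]]]; split.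
  - intros g hg.
    assert (hg' : in_l2 (fun n => - Cconj (g n))%C)
      by (apply (in_l2_Cmod_ext _ g); [intros n; apply Cmod_opp_conj | exact hg]).
    destruct (hsolve _ hg') as [f' [hf' [E' uniq']]].
    exists (conjF f'); split; [|split].
    + now apply (in_H3_Cmod_ext _ f'); [intros n; apply Cmod_conj |].
    + intros n; rewrite <- (Copp_conj_involutive mu), <- (Copp_conj_involutive (g n)).
      exact (conjF_solves f' (fun n => - Cconj (g n))%C _ E' n).
    + intros f hf E.
      rewrite <- (conjF_involutive f); f_equal; apply uniq'.
      * now apply (in_H3_Cmod_ext _ f); [intros n; apply Cmod_conj |].
      * now apply conjF_solves.
  - exists K; split; [exact hK |]; intros f g hf hg E.
    rewrite <- (l2norm_Cmod_ext (conjF f) f (fun n => Cmod_conj (f n))),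
            <- (l2norm_Cmod_ext (fun n => - Cconj (g n))%C g (fun n => Cmod_opp_conj (g n))).
    apply hbound.
    + now apply (in_H3_Cmod_ext _ f); [intros n; apply Cmod_conj |].
    + now apply (in_l2_Cmod_ext _ g); [intros n; apply Cmod_opp_conj |].
    + now apply conjF_solves.
Qed.

Lemma in_spectrum_reflect (mu : C) : in_spectrum H mu -> in_spectrum H (- Cconj mu)%C.
Proof.
  intros hspec hres; exact (hspec (in_resolvent_reflect mu hres)).
Qed.

End ConjugationReflection.

Theorem lemma2p4 (rho phi k : R) (hk : 0 < k)
  (w : R -> R -> R) (c : R -> R) (a1 : R) (ha1 : 0 < a1)
  (* the small-amplitude periodic traveling wave family, parametrized by a *)
  (hsmooth : forall a, Rabs a < a1 -> smooth (w a))
  (heven : forall a, Rabs a < a1 -> forall z, w a (- z) = w a z)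
  (hper : forall a, Rabs a < a1 -> forall z, w a (z + 2 * PI) = w a z)
  (hexp : exists M : R, forall a, Rabs a < a1 ->
     (forall z, Rabs (w a z - (a * cos z
        + a ^ 2 * (- (3 * rho) / (2 * k ^ 2) + rho / (2 * k ^ 2) * cos (2 * z))
        + a ^ 3 * (- phi ^ 2 / (64 * k ^ 2) + 3 * rho ^ 2 / (16 * k ^ 4)) * cos (3 * z)))
        <= M * Rabs a ^ 4) /\
     Rabs (c a - (k ^ 2 + a ^ 2 * (3 * phi ^ 2 / 8 + 15 * rho ^ 2 / (2 * k ^ 2))))
        <= M * Rabs a ^ 4) :
  exists a0 : R, 0 < a0 /\
    forall a : R, Rabs a < a0 ->
    forall gamma tau : R, -1/2 < tau <= 1/2 -> tau <> 0 ->
    forall mu : C,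
      in_spectrum (Hop k rho phi (w a) (c a) gamma tau) mu ->
      in_spectrum (Hop k rho phi (w a) (c a) gamma tau) (Copp (Cconj mu)).
Proof.
  exists a1; split; [exact ha1 |].
  intros a ha gamma tau _ _ mu.
  assert (hd : forall z, ex_derive (w a) z) by (intros z; exact (hsmooth a ha 1%nat z)).
  assert (hd2 : forall z, ex_derive (Derive (w a)) z)
    by (intros z; exact (hsmooth a ha 2%nat z)).
  assert (hrefl : forall z, w a (2 * PI - z) = w a z).
  { intros z; replace (2 * PI - z) with (- z + 2 * PI) by ring.
    now rewrite (hper a ha), (heven a ha). }
  assert (hc : forall z, continuous (w a) z)
    by (intros z; exact (ex_derive_continuous (w a) z (hd z))).
  assert (hdc : forall z, continuous (Derive (w a)) z)
    by (intros z; exact (ex_derive_continuous (Derive (w a)) z (hd2 z))).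
  apply in_spectrum_reflect; intros f n; apply Hop_conj; intros j.
  - now apply Im_fcoef_reflect_even.
  - apply Im_fcoef_reflect_even.
    + (* [w a z ^ 2] computes to [w a z * (w a z * 1)]. *)
      intros z; apply (continuous_mult (w a) (fun t => w a t * 1)); [exact (hc z) |].
      apply (continuous_mult (w a) (fun _ => 1)); [exact (hc z) | apply continuous_const].
    + intros z; now rewrite hrefl.
  - apply Re_fcoef_reflect_odd; [exact hdc |].
    intros z; apply Derive_reflect_even; [apply hd | exact hrefl].
Qed.
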